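(* Let $N\ge1$, $h\in(0,1)$, $\varepsilon\in(0,1/2]$, and let $\Phi$ be the opinion operator defined in the context. Then for every $V^0\in[-1,1]^N$ with nondecreasing components, the sequence $\Phi^n(V^0)$ converges as $n\to\infty$ to a fixed point of $\Phi$.
   Context: For $V=(v_1,\dots,v_N)\in[-1,1]^N$ and each $k$, let $J(v_k)=\{l\in\{1,\dots,N\}:|v_l-v_k|\le\varepsilon\}$ and $I(v_k)=|J(v_k)|$. Put $w_k(V)=v_k+\frac{h}{I(v_k)}\sum_{l\in J(v_k)}v_l$. Then $\Phi(V)=(v_1',\dots,v_N')$ where $v_k'=-1$ if $w_k<-1$, $v_k'=1$ if $w_k>1$, and $v_k'=w_k$ if $|w_k|\le1$. *)

(* Opinion vectors V in [-1,1]^N are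
   represented as functions V : nat -> R, with components V 0, ..., V (N-1)
   (0-based indexing of the paper's v_1..v_N); values at indices >= N are
   irrelevant, and Phi sets them to 0. *)
From Stdlib Require Import Reals List.
Open Scope R_scope.

Definition Jset (N : nat) (eps : R) (V : nat -> R) (k : nat) : list nat :=
  filter (fun l => if Rle_dec (Rabs (V l - V k)) eps then true else false)
         (seq 0 N).

Definition Icard (N : nat) (eps : R) (V : nat -> R) (k : nat) : nat :=
  length (Jset N eps V k).

Definition w (N : nat) (h eps : R) (V : nat -> R) (k : nat) : R :=
  V k + h / INR (Icard N eps V k)
        * fold_right Rplus 0 (map V (Jset N eps V k)).

Definition clip (x : R) : R :=
  if Rlt_dec x (-1) then -1 else if Rlt_dec 1 x then 1 else x.

Definition Phi (N : nat) (h eps : R) (V : nat -> R) : nat -> R :=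
  fun k => if Nat.ltb k N then clip (w N h eps V k) else 0.

Definition in_cube (N : nat) (V : nat -> R) : Prop :=
  forall k, (k < N)%nat -> -1 <= V k <= 1.

Definition nondecreasing_vec (N : nat) (V : nat -> R) : Prop :=
  forall i j, (i <= j < N)%nat -> V i <= V j.

(* [Phi] preserves the order of the opinions, since the local mean of a
   window is nondecreasing in its centre.  An opinion that reaches [eps] has a
   local mean of at least [eps / N], so it climbs to [1] and stays there;
   symmetrically below [-eps].  Hence after some time [T] every opinion is
   frozen at [1] or [-1] or stays in [(-eps, eps)] forever; as [eps <= 1/2],
   the windows of these central opinions see only central opinions, and they
   move without clipping.  Let [t] and [b] be the top and bottom central
   opinions, with local means [m_t >= m_b].  One step never decreases
   [m_t - m_b], while [x_t - x_b] grows by [h (m_t - m_b)] and stays below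
   [2 eps]; so [m_t = m_b], and then this common value is multiplied by
   [1 + h] at each step while moving the bounded [x_t] by [h m_t], so it is
   [0].  All central drifts vanish at time [T], which is a fixed point. *)

From Stdlib Require Import Reals List Lra Lia Classical FunctionalExtensionality.
Open Scope R_scope.

Fixpoint sumN (n : nat) (f : nat -> R) : R :=
  match n with O => 0 | S n' => sumN n' f + f n' end.

Lemma sumN_ext n f g : (forall i, (i < n)%nat -> f i = g i) -> sumN n f = sumN n g.
Proof.
  induction n as [|n IH]; intros Hfg; simpl; [reflexivity|].
  rewrite IH, Hfg; [reflexivity|lia|intros; apply Hfg; lia].
Qed.

Lemma sumN_plus n f g : sumN n (fun i => f i + g i) = sumN n f + sumN n g.
Proof. induction n as [|n IH]; simpl; [ring|]. rewrite IH; ring. Qed.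

Lemma sumN_scal_l n c f : sumN n (fun i => c * f i) = c * sumN n f.
Proof. induction n as [|n IH]; simpl; [ring|]. rewrite IH; ring. Qed.

Lemma sumN_le n f g : (forall i, (i < n)%nat -> f i <= g i) -> sumN n f <= sumN n g.
Proof.
  induction n as [|n IH]; intros Hfg; simpl; [lra|].
  apply Rplus_le_compat; [apply IH; intros; apply Hfg|apply Hfg]; lia.
Qed.

Lemma sumN_const n c : sumN n (fun _ => c) = INR n * c.
Proof. induction n as [|n IH]; simpl sumN; [simpl; ring|]. rewrite IH, S_INR; ring. Qed.

Lemma sumN_nonneg n f : (forall i, (i < n)%nat -> 0 <= f i) -> 0 <= sumN n f.
Proof.
  intros Hf. replace 0 with (sumN n (fun _ => 0)) by (rewrite sumN_const; ring).
  now apply sumN_le.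
Qed.

Lemma sumN_term_le n f k :
  (forall i, (i < n)%nat -> 0 <= f i) -> (k < n)%nat -> f k <= sumN n f.
Proof.
  induction n as [|n IH]; intros Hf Hk; [lia|]. simpl.
  assert (0 <= sumN n f) by (apply sumN_nonneg; intros; apply Hf; lia).
  destruct (Nat.eq_dec k n) as [->|Hkn]; [lra|].
  assert (f k <= sumN n f) by (apply IH; [intros; apply Hf|]; lia).
  assert (0 <= f n) by (apply Hf; lia). lra.
Qed.

Lemma sumN_swap n m (g : nat -> nat -> R) :
  sumN n (fun i => sumN m (fun j => g i j)) = sumN m (fun j => sumN n (fun i => g i j)).
Proof.
  induction n as [|n IH]; simpl.
  - rewrite sumN_const; ring.
  - rewrite IH, <- sumN_plus. reflexivity.
Qed.

Definition ind (b : bool) : R := if b then 1 else 0.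

Lemma fold_right_Rplus_init (s : list R) a : fold_right Rplus a s = fold_right Rplus 0 s + a.
Proof. induction s as [|x s IH]; simpl; [ring|]. rewrite IH; ring. Qed.

Lemma fold_right_Rplus_filter n (P : nat -> bool) (f : nat -> R) :
  fold_right Rplus 0 (map f (filter P (seq 0 n))) = sumN n (fun l => ind (P l) * f l).
Proof.
  induction n as [|n IH]; [reflexivity|].
  rewrite seq_S, filter_app, map_app, fold_right_app, fold_right_Rplus_init, IH.
  simpl. destruct (P n); simpl; ring.
Qed.

Lemma length_filter_INR n (P : nat -> bool) :
  INR (length (filter P (seq 0 n))) = sumN n (fun l => ind (P l)).
Proof.
  induction n as [|n IH]; [reflexivity|].
  rewrite seq_S, filter_app, length_app, plus_INR, IH.
  simpl. destruct (P n); simpl; ring.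
Qed.

Definition card N (P : nat -> bool) : R := sumN N (fun l => ind (P l)).

Definition avg N (P : nat -> bool) (f : nat -> R) : R :=
  sumN N (fun l => ind (P l) * f l) / card N P.

Lemma card_le N P : card N P <= INR N.
Proof.
  unfold card. rewrite <- (Rmult_1_r (INR N)), <- sumN_const.
  apply sumN_le; intros l _; unfold ind; destruct (P l); lra.
Qed.

Lemma card_ge1 N (P : nat -> bool) k : (k < N)%nat -> P k = true -> 1 <= card N P.
Proof.
  intros Hk Pk. unfold card. replace 1 with (ind (P k)) by (rewrite Pk; reflexivity).
  apply (sumN_term_le N (fun l => ind (P l))); [|exact Hk].
  intros l _; unfold ind; destruct (P l); lra.
Qed.

Lemma avg_ge N P f a : 0 < card N P ->
  (forall l, (l < N)%nat -> P l = true -> a <= f l) -> a <= avg N P f.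
Proof.
  intros HC Hf. unfold avg. apply Rmult_le_reg_r with (card N P); [exact HC|].
  unfold Rdiv. rewrite Rmult_assoc, Rinv_l, Rmult_1_r by lra.
  unfold card. rewrite <- sumN_scal_l.
  apply sumN_le; intros l Hl. specialize (Hf l Hl). unfold ind.
  destruct (P l); [specialize (Hf eq_refl)|]; lra.
Qed.

Lemma avg_opp N P f : avg N P (fun l => - f l) = - avg N P f.
Proof.
  unfold avg. rewrite (sumN_ext N _ (fun l => -1 * (ind (P l) * f l))), sumN_scal_l
    by (intros; ring).
  unfold Rdiv; ring.
Qed.

Lemma avg_le N P f a : 0 < card N P ->
  (forall l, (l < N)%nat -> P l = true -> f l <= a) -> avg N P f <= a.
Proof.
  intros HC Hf. rewrite <- (Ropp_involutive (avg N P f)), <- avg_opp.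
  enough (- a <= avg N P (fun l => - f l)) by lra.
  apply avg_ge; [exact HC|]. intros l Hl Pl. specialize (Hf l Hl Pl). lra.
Qed.

Lemma avg_ext_on N P f g : (forall l, (l < N)%nat -> P l = true -> f l = g l) ->
  avg N P f = avg N P g.
Proof.
  intros Hfg. unfold avg. f_equal. apply sumN_ext; intros l Hl.
  unfold ind. destruct (P l) eqn:Pl; [rewrite Hfg|]; auto; ring.
Qed.

Lemma avg_plus_scal N P f c g :
  avg N P (fun l => f l + c * g l) = avg N P f + c * avg N P g.
Proof.
  unfold avg.
  rewrite (sumN_ext N _ (fun l => ind (P l) * f l + c * (ind (P l) * g l))) by (intros; ring).
  rewrite sumN_plus, sumN_scal_l. unfold Rdiv; ring.
Qed.

Lemma sumN_mult n m f g :
  sumN n f * sumN m g = sumN n (fun i => sumN m (fun j => f i * g j)).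
Proof.
  rewrite Rmult_comm, <- sumN_scal_l. apply sumN_ext; intros i _.
  rewrite Rmult_comm, <- sumN_scal_l. reflexivity.
Qed.

(* Cross-multiplied, the difference of the two averages is the sum over
   l in P, l' in Q of f l - f l'; the pairs whose swap is also such a pair
   cancel, and the remaining ones are nonnegative by hypothesis. *)
Lemma avg_le_avg N (P Q : nat -> bool) f : 0 < card N P -> 0 < card N Q ->
  (forall l l', (l < N)%nat -> (l' < N)%nat -> P l = true -> Q l' = true ->
     ~ (P l' = true /\ Q l = true) -> f l' <= f l) ->
  avg N Q f <= avg N P f.
Proof.
  intros HP HQ Hf.
  set (SP := sumN N (fun l => ind (P l) * f l)).
  set (SQ := sumN N (fun l => ind (Q l) * f l)).
  set (T := fun l l' => ind (P l) * ind (Q l') * (f l - f l')).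
  assert (Hdiff : sumN N (fun l => sumN N (fun l' => T l l')) + card N P * SQ = SP * card N Q).
  { unfold SP, SQ, card. rewrite !sumN_mult, <- sumN_plus.
    apply sumN_ext; intros l _. rewrite <- sumN_plus.
    apply sumN_ext; intros l' _. unfold T; ring. }
  assert (Hpairs : 0 <= sumN N (fun l => sumN N (fun l' => T l l' + T l' l))).
  { apply sumN_nonneg; intros l Hl. apply sumN_nonneg; intros l' Hl'. unfold T, ind.
    destruct (P l) eqn:Pl, (Q l') eqn:Ql', (P l') eqn:Pl', (Q l) eqn:Ql; simpl;
      try (assert (f l' <= f l) by (apply Hf; auto; intros [? ?]; congruence));
      try (assert (f l <= f l') by (apply Hf; auto; intros [? ?]; congruence));
      lra. }
  rewrite (sumN_ext N _ (fun l => sumN N (fun l' => T l l') + sumN N (fun l' => T l' l)))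
    in Hpairs by (intros; apply sumN_plus).
  rewrite sumN_plus, (sumN_swap N N (fun i j => T j i)) in Hpairs.
  unfold avg. fold SP SQ.
  replace (SQ / card N Q) with (card N P * SQ * / (card N P * card N Q)) by (field; lra).
  replace (SP / card N P) with (SP * card N Q * / (card N P * card N Q)) by (field; lra).
  apply Rmult_le_compat_r; [left; apply Rinv_0_lt_compat, Rmult_lt_0_compat; lra|]. lra.
Qed.

Lemma clip_mono x y : x <= y -> clip x <= clip y.
Proof. unfold clip; intros; repeat destruct Rlt_dec; lra. Qed.

Lemma clip_range x : -1 <= clip x <= 1.
Proof. unfold clip; repeat destruct Rlt_dec; lra. Qed.

Lemma clip_id x : -1 <= x <= 1 -> clip x = x.
Proof. unfold clip; intros; repeat destruct Rlt_dec; lra. Qed.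

Lemma clip_interior x : -1 < clip x < 1 -> clip x = x.
Proof. unfold clip; intros; repeat destruct Rlt_dec; lra. Qed.

Lemma clip_opp x : clip (- x) = - clip x.
Proof. unfold clip; repeat destruct Rlt_dec; lra. Qed.

Lemma bounded_increments_nonpos (z : nat -> R) c B :
  (forall n, z n + c <= z (S n)) -> (forall n, z n <= B) -> c <= 0.
Proof.
  intros Hinc Hbnd. destruct (Rle_lt_dec c 0) as [|Hc]; [assumption|].
  assert (Hlin : forall n, z 0%nat + INR n * c <= z n).
  { induction n as [|n IH]; [simpl; lra|]. rewrite S_INR. specialize (Hinc n). lra. }
  destruct (INR_unbounded ((B - z 0%nat) / c)) as [n Hn].
  apply (Rmult_lt_compat_r c) in Hn; [|exact Hc].
  unfold Rdiv in Hn. rewrite Rmult_assoc, Rinv_l in Hn by lra.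
  specialize (Hlin n). specialize (Hbnd n). lra.
Qed.

Lemma absorbed_at_one (z : nat -> R) a c n0 : 0 < c -> (forall n, z n <= 1) ->
  (forall n, a <= z n -> a <= z (S n) /\ (z (S n) = 1 \/ z n + c <= z (S n))) ->
  a <= z n0 -> exists T, forall n, (T <= n)%nat -> z n = 1.
Proof.
  intros Hc Hle1 Hstep Hn0.
  assert (Habove : forall j, a <= z (n0 + j)%nat).
  { induction j as [|j IH]; [rewrite Nat.add_0_r; exact Hn0|].
    rewrite Nat.add_succ_r. apply Hstep, IH. }
  destruct (classic (exists j, z (n0 + j)%nat = 1)) as [[j Hj]|Hnever].
  - exists (n0 + j)%nat. intros n Hn. replace n with (n0 + (j + (n - (n0 + j))))%nat by lia.
    induction (n - (n0 + j))%nat as [|i IH]; [rewrite Nat.add_0_r; exact Hj|].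
    rewrite Nat.add_succ_r, Nat.add_succ_r. specialize (Hle1 (S (n0 + (j + i)))).
    destruct (Hstep _ (Habove (j + i)%nat)) as [_ [|]]; lra.
  - exfalso.
    assert (c <= 0); [|lra].
    apply (bounded_increments_nonpos (fun j => z (n0 + j)%nat) c 1); [|intros; apply Hle1].
    intros j. rewrite Nat.add_succ_r.
    destruct (Hstep _ (Habove j)) as [_ [Hone|]]; [|assumption].
    exfalso. apply Hnever. exists (S j). rewrite Nat.add_succ_r. exact Hone.
Qed.

Lemma exists_common_threshold (E : nat -> nat -> Prop) N :
  (forall k, (k < N)%nat -> exists T, E T k) ->
  (forall T T' k, (T <= T')%nat -> E T k -> E T' k) ->
  exists T, forall k, (k < N)%nat -> E T k.
Proof.
  intros Hex Hmono. induction N as [|N IH].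
  - exists 0%nat; intros; lia.
  - destruct IH as [T1 HT1]; [intros; apply Hex; lia|].
    destruct (Hex N ltac:(lia)) as [T2 HT2]. exists (Nat.max T1 T2). intros k Hk.
    destruct (Nat.eq_dec k N) as [->|].
    + apply (Hmono T2); [lia|exact HT2].
    + apply (Hmono T1); [lia|apply HT1; lia].
Qed.

Lemma exists_argmax (P : nat -> Prop) (f : nat -> R) N :
  (exists k, (k < N)%nat /\ P k) ->
  exists t, (t < N)%nat /\ P t /\ forall k, (k < N)%nat -> P k -> f k <= f t.
Proof.
  induction N as [|N IH]; intros [k [Hk Pk]]; [lia|].
  destruct (classic (exists k, (k < N)%nat /\ P k)) as [Hex|Hno].
  - destruct (IH Hex) as [t [Ht [Pt Hmax]]].
    destruct (classic (P N /\ f t < f N)) as [[PN Hlt]|Hnot].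
    + exists N. repeat split; auto. intros j Hj Pj.
      destruct (Nat.eq_dec j N) as [->|]; [lra|]. specialize (Hmax j ltac:(lia) Pj). lra.
    + exists t. repeat split; auto. intros j Hj Pj.
      destruct (Nat.eq_dec j N) as [->|]; [|apply Hmax; auto; lia].
      destruct (Rle_lt_dec (f N) (f t)); [assumption|]. exfalso; auto.
  - exists k. repeat split; auto. intros j Hj Pj.
    destruct (Nat.eq_dec j N) as [->|]; [|exfalso; apply Hno; exists j; split; auto; lia].
    destruct (Nat.eq_dec k N) as [->|]; [lra|]. exfalso; apply Hno; exists k; split; auto; lia.
Qed.

(* [x], [y] follow the top and bottom central opinions and [mt], [mb] are
   their local means; [A], [C] are the averages of the local means over the
   next windows of the top and of the bottom opinion. *)
Lemma extremal_drifts_zero (x y mt mb : nat -> R) h B : 0 < h ->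
  (forall n, x (S n) = x n + h * mt n) -> (forall n, y (S n) = y n + h * mb n) ->
  (forall n, Rabs (x n) <= B) -> (forall n, Rabs (y n) <= B) ->
  (forall n, mb n <= mt n) ->
  (forall n, exists A C, mt n + h * A <= mt (S n) /\ mb (S n) <= mb n + h * C /\
                         C <= A /\ mb n <= A /\ C <= mt n) ->
  mt 0%nat = 0 /\ mb 0%nat = 0.
Proof.
  intros Hh Hx Hy Bx By Hbt Hstep.
  assert (Hgap : forall n j, mt n - mb n <= mt (n + j)%nat - mb (n + j)%nat).
  { intros n j. induction j as [|j IH]; [rewrite Nat.add_0_r; lra|].
    rewrite Nat.add_succ_r. destruct (Hstep (n + j)%nat) as (A & C & H1 & H2 & H3 & _).
    assert (h * C <= h * A) by (apply Rmult_le_compat_l; lra). lra. }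
  assert (Hgap0 : forall n, mt n = mb n).
  { intros n. apply Rle_antisym; [|apply Hbt].
    assert (h * (mt n - mb n) <= 0); [|nra].
    apply (bounded_increments_nonpos (fun j => x (n + j)%nat - y (n + j)%nat) _ (2 * B)).
    - intros j. rewrite Nat.add_succ_r, Hx, Hy.
      assert (h * (mt n - mb n) <= h * (mt (n + j)%nat - mb (n + j)%nat))
        by (apply Rmult_le_compat_l; [lra|apply Hgap]).
      lra.
    - intros j. specialize (Bx (n + j)%nat). specialize (By (n + j)%nat).
      pose proof (Rle_abs (x (n + j)%nat)). pose proof (Rle_abs (- y (n + j)%nat)).
      rewrite Rabs_Ropp in *. lra. }
  assert (Hgrow : forall n, mt (S n) = (1 + h) * mt n).
  { intros n. destruct (Hstep n) as (A & C & H1 & H2 & _ & H4 & H5).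
    assert (h * mb n <= h * A) by (apply Rmult_le_compat_l; lra).
    assert (h * C <= h * mt n) by (apply Rmult_le_compat_l; lra).
    rewrite <- (Hgap0 n), <- (Hgap0 (S n)) in *. lra. }
  assert (Hsq : forall n, mt 0%nat * mt 0%nat <= mt 0%nat * mt n).
  { induction n as [|n IH]; [lra|]. rewrite Hgrow. nra. }
  assert (h * (mt 0%nat * mt 0%nat) <= 0).
  { apply (bounded_increments_nonpos (fun n => mt 0%nat * x n) _ (Rabs (mt 0%nat) * B)).
    - intros n. rewrite Hx. specialize (Hsq n). nra.
    - intros n. rewrite <- (Rabs_pos_eq (Rabs (mt 0%nat))) by apply Rabs_pos.
      eapply Rle_trans; [apply Rle_abs|]. rewrite Rabs_mult, Rabs_Rabsolu.
      apply Rmult_le_compat_l; [apply Rabs_pos|apply Bx]. }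
  assert (Hz : mt 0%nat = 0).
  { destruct (Req_dec (mt 0%nat) 0) as [|Hnz]; [assumption|].
    pose proof (Rsqr_pos_lt _ Hnz). unfold Rsqr in *. nra. }
  rewrite <- Hgap0. auto.
Qed.

Definition win (eps : R) (V : nat -> R) (x : R) (l : nat) : bool :=
  if Rle_dec (Rabs (V l - x)) eps then true else false.

Definition mean N eps V x : R := avg N (win eps V x) V.

Definition drift N eps V k : R := mean N eps V (V k).

Lemma w_eq N h eps V k : w N h eps V k = V k + h * drift N eps V k.
Proof.
  unfold w, Icard, drift, mean, avg, card.
  change (Jset N eps V k) with (filter (win eps V (V k)) (seq 0 N)).
  rewrite fold_right_Rplus_filter, length_filter_INR. unfold Rdiv; ring.
Qed.

Lemma Phi_lt N h eps V k : (k < N)%nat -> Phi N h eps V k = clip (V k + h * drift N eps V k).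
Proof. intros Hk. unfold Phi. apply Nat.ltb_lt in Hk. rewrite Hk, w_eq. reflexivity. Qed.

Lemma Phi_ext N h eps V W : (forall l, (l < N)%nat -> V l = W l) ->
  forall k, Phi N h eps V k = Phi N h eps W k.
Proof.
  intros HVW k. unfold Phi, w, Icard, Jset. destruct (Nat.ltb k N) eqn:Hk; [|reflexivity].
  apply Nat.ltb_lt in Hk. rewrite (HVW k Hk).
  assert (Hseq : forall l, In l (seq 0 N) -> (l < N)%nat) by (intros l Hl; apply in_seq in Hl; lia).
  erewrite filter_ext_in by (intros l Hl; rewrite (HVW l (Hseq l Hl)); reflexivity).
  erewrite map_ext_in; [reflexivity|].
  intros l Hl. apply filter_In in Hl. apply HVW, Hseq, Hl.
Qed.

Lemma win_true eps V x l : win eps V x l = true <-> x - eps <= V l <= x + eps.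
Proof.
  unfold win. destruct Rle_dec as [H|H]; split; intros; try congruence.
  - revert H; unfold Rabs; destruct Rcase_abs; lra.
  - exfalso; apply H, Rabs_le; lra.
Qed.

Lemma win_false eps V x l : win eps V x l = false <-> V l < x - eps \/ x + eps < V l.
Proof.
  unfold win. destruct Rle_dec as [H|H]; split; intros Hl; try congruence.
  - exfalso. revert H; unfold Rabs; destruct Rcase_abs; lra.
  - apply Rnot_le_lt in H. revert H; unfold Rabs; destruct Rcase_abs; lra.
Qed.

Lemma card_win_ge1 N eps V k : 0 <= eps -> (k < N)%nat -> 1 <= card N (win eps V (V k)).
Proof. intros He Hk. apply (card_ge1 N _ k Hk), win_true. lra. Qed.

Lemma card_win_pos N eps V k : 0 <= eps -> (k < N)%nat -> 0 < card N (win eps V (V k)).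
Proof. intros He Hk. pose proof (card_win_ge1 N eps V k He Hk). lra. Qed.

Lemma mean_mono N eps V x y :
  0 < card N (win eps V x) -> 0 < card N (win eps V y) -> x <= y ->
  mean N eps V x <= mean N eps V y.
Proof.
  intros Hx Hy Hxy. apply avg_le_avg; [exact Hy|exact Hx|].
  intros l l' _ _ Hl Hl' Hnot. apply win_true in Hl, Hl'.
  destruct (win eps V y l') eqn:E1; [destruct (win eps V x l) eqn:E2|].
  - exfalso; auto.
  - apply win_false in E2. lra.
  - apply win_false in E1. lra.
Qed.

Lemma drift_mono N eps V k l : 0 <= eps -> (k < N)%nat -> (l < N)%nat -> V k <= V l ->
  drift N eps V k <= drift N eps V l.
Proof.
  intros He Hk Hl Hkl. apply mean_mono; [apply card_win_pos..|exact Hkl]; assumption.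
Qed.

Lemma Phi_mono N h eps V k l : 0 <= h -> 0 <= eps -> (k < N)%nat -> (l < N)%nat ->
  V k <= V l -> Phi N h eps V k <= Phi N h eps V l.
Proof.
  intros Hh He Hk Hl Hkl. rewrite !Phi_lt by assumption. apply clip_mono.
  pose proof (drift_mono N eps V k l He Hk Hl Hkl).
  apply Rplus_le_compat; [exact Hkl|]. apply Rmult_le_compat_l; assumption.
Qed.

Lemma Phi_lt_reflect N h eps V k l : 0 <= h -> 0 <= eps -> (k < N)%nat -> (l < N)%nat ->
  Phi N h eps V k < Phi N h eps V l -> V k < V l.
Proof.
  intros Hh He Hk Hl HPhi. destruct (Rlt_le_dec (V k) (V l)) as [|Hlk]; [assumption|].
  pose proof (Phi_mono N h eps V l k Hh He Hl Hk Hlk). lra.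
Qed.

(* Every member of the window of [V k] is at least [V k - eps >= 0], and [k]
   itself contributes [V k >= eps], while the window has at most [N] members. *)
Lemma drift_ge N eps V k : 0 < eps -> (k < N)%nat -> eps <= V k ->
  eps / INR N <= drift N eps V k.
Proof.
  intros He Hk HVk.
  assert (HN : 0 < INR N) by (apply lt_0_INR; lia).
  set (P := win eps V (V k)).
  assert (HC1 : 1 <= card N P) by (apply card_win_ge1; [lra|exact Hk]).
  pose proof (card_le N P) as HCN.
  assert (HS : V k <= sumN N (fun l => ind (P l) * V l)).
  { assert (Pk : P k = true) by (apply win_true; lra).
    replace (V k) with (ind (P k) * V k) at 1 by (rewrite Pk; simpl; ring).
    apply (sumN_term_le N (fun l => ind (P l) * V l)); [|exact Hk].
    intros l _. unfold ind. destruct (P l) eqn:Pl; [|lra].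
    apply win_true in Pl. lra. }
  unfold drift, mean, avg. fold P.
  apply Rle_trans with (V k / card N P).
  - unfold Rdiv. apply Rmult_le_compat; try lra.
    + left; apply Rinv_0_lt_compat; lra.
    + apply Rinv_le_contravar; lra.
  - unfold Rdiv. apply Rmult_le_compat_r; [left; apply Rinv_0_lt_compat; lra|exact HS].
Qed.

Definition oppV (V : nat -> R) : nat -> R := fun k => - V k.

Lemma win_opp eps V x : win eps (oppV V) (- x) = win eps V x.
Proof.
  extensionality l. unfold win, oppV.
  replace (- V l - - x) with (- (V l - x)) by ring. rewrite Rabs_Ropp. reflexivity.
Qed.

Lemma drift_opp N eps V : drift N eps (oppV V) = oppV (drift N eps V).
Proof.
  extensionality k. unfold drift, mean, oppV at 2 3. rewrite win_opp. apply avg_opp.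
Qed.

Lemma Phi_opp N h eps V : Phi N h eps (oppV V) = oppV (Phi N h eps V).
Proof.
  extensionality k. unfold Phi, oppV at 2. rewrite !w_eq, drift_opp.
  destruct (Nat.ltb k N); [|ring]. unfold oppV. rewrite <- clip_opp. f_equal. ring.
Qed.

Definition traj N h eps V n : nat -> R := Nat.iter n (Phi N h eps) V.

Lemma traj_opp N h eps V n : traj N h eps (oppV V) n = oppV (traj N h eps V n).
Proof.
  induction n as [|n IH]; [reflexivity|]. unfold traj in *. simpl. rewrite IH. apply Phi_opp.
Qed.

Lemma traj_const_from N h eps V T :
  (forall k, (k < N)%nat -> traj N h eps V (S T) k = traj N h eps V T k) ->
  forall n, (T <= n)%nat -> forall k, (k < N)%nat -> traj N h eps V n k = traj N h eps V T k.
Proof.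
  intros HT n Hn. induction Hn as [|n Hn IH]; intros k Hk; [reflexivity|].
  change (traj N h eps V (S n) k) with (Phi N h eps (traj N h eps V n) k).
  rewrite (Phi_ext N h eps _ _ IH). apply HT, Hk.
Qed.

Section Dynamics.

Variables (N : nat) (h eps : R).
Hypothesis h_pos : 0 < h.
Hypothesis eps_pos : 0 < eps.
Hypothesis eps_le_half : eps <= 1 / 2.

Local Notation Phi := (Phi N h eps).
Local Notation traj := (traj N h eps).
Local Notation drift := (drift N eps).

Let h_ge0 : 0 <= h := Rlt_le _ _ h_pos.
Let eps_ge0 : 0 <= eps := Rlt_le _ _ eps_pos.

Lemma traj_range V n k : in_cube N V -> (k < N)%nat -> -1 <= traj V n k <= 1.
Proof.
  intros HV Hk. destruct n as [|n]; [apply HV, Hk|].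
  unfold traj; simpl. rewrite Phi_lt by exact Hk. apply clip_range.
Qed.

Lemma absorption_speed_pos : (0 < N)%nat -> 0 < h * (eps / INR N).
Proof.
  intros HN. apply Rmult_lt_0_compat; [exact h_pos|].
  apply Rdiv_lt_0_compat, lt_0_INR; [exact eps_pos|exact HN].
Qed.

Lemma Phi_push_up V k : (k < N)%nat -> eps <= V k <= 1 ->
  eps <= Phi V k /\ (Phi V k = 1 \/ V k + h * (eps / INR N) <= Phi V k).
Proof.
  intros Hk HVk. rewrite Phi_lt by exact Hk.
  pose proof (drift_ge N eps V k eps_pos Hk (proj1 HVk)).
  assert (0 < h * (eps / INR N)) by (apply absorption_speed_pos; lia).
  assert (h * (eps / INR N) <= h * drift V k) by (apply Rmult_le_compat_l; lra).
  unfold clip. repeat destruct Rlt_dec; split; try lra; try (left; lra); right; lra.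
Qed.

Lemma traj_absorbed_one V k n0 : in_cube N V -> (k < N)%nat -> eps <= traj V n0 k ->
  exists T, forall n, (T <= n)%nat -> traj V n k = 1.
Proof.
  intros HV Hk Hn0.
  apply (absorbed_at_one (fun n => traj V n k) eps (h * (eps / INR N)) n0);
    [| |intros n Hn|exact Hn0].
  - apply absorption_speed_pos; lia.
  - intros n. apply traj_range; assumption.
  - apply Phi_push_up; [exact Hk|]. split; [exact Hn|apply traj_range; assumption].
Qed.

Lemma traj_absorbed_mone V k n0 : in_cube N V -> (k < N)%nat -> traj V n0 k <= - eps ->
  exists T, forall n, (T <= n)%nat -> traj V n k = -1.
Proof.
  intros HV Hk Hn0.
  destruct (traj_absorbed_one (oppV V) k n0) as [T HT]; [| |rewrite traj_opp; unfold oppV; lra|].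
  - intros l Hl. unfold oppV. specialize (HV l Hl). lra.
  - exact Hk.
  - exists T. intros n Hn. specialize (HT n Hn). rewrite traj_opp in HT. unfold oppV in HT. lra.
Qed.

Definition settles_by V T k : Prop :=
  (forall n, (T <= n)%nat -> traj V n k = 1) \/
  (forall n, (T <= n)%nat -> traj V n k = -1) \/
  (forall n, - eps < traj V n k < eps).

Lemma settles_by_mono V T T' k : (T <= T')%nat -> settles_by V T k -> settles_by V T' k.
Proof.
  intros HT [H|[H|H]]; [left|right; left|right; right]; auto; intros n Hn; apply H; lia.
Qed.

Lemma exists_settles_by V k : in_cube N V -> (k < N)%nat -> exists T, settles_by V T k.
Proof.
  intros HV Hk.
  destruct (classic (exists n, eps <= traj V n k)) as [[n Hn]|Hnever_high].
  { destruct (traj_absorbed_one V k n HV Hk Hn) as [T HT]. exists T; left; exact HT. }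
  destruct (classic (exists n, traj V n k <= - eps)) as [[n Hn]|Hnever_low].
  { destruct (traj_absorbed_mone V k n HV Hk Hn) as [T HT]. exists T; right; left; exact HT. }
  exists 0%nat; right; right. intros n. split; apply Rnot_le_lt; intros Hn; eauto.
Qed.

Definition central V l : Prop := - eps < V l < eps /\ - eps < Phi V l < eps.

Definition settled V : Prop :=
  forall k, (k < N)%nat ->
    central V k \/ (V k = 1 /\ Phi V k = 1) \/ (V k = -1 /\ Phi V k = -1).

Lemma settled_opp V : settled V -> settled (oppV V).
Proof.
  intros HS k Hk. unfold central. rewrite Phi_opp. unfold oppV.
  destruct (HS k Hk) as [[H1 H2]|[[H1 H2]|[H1 H2]]]; lra.
Qed.

(* Since [eps <= 1/2], a window around a point of [(-eps, eps)] cannot reach [1] or [-1]. *)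
Lemma settled_win_central V x l : settled V -> - eps < x < eps -> (l < N)%nat ->
  win eps V x l = true \/ win eps (Phi V) x l = true -> central V l.
Proof.
  intros HS Hx Hl Hw. rewrite !win_true in Hw.
  destruct (HS l Hl) as [|[[H1 H2]|[H1 H2]]]; [assumption|exfalso; lra..].
Qed.

Lemma Phi_central V l : (l < N)%nat -> - eps < Phi V l < eps -> Phi V l = V l + h * drift V l.
Proof.
  intros Hl HPhi. rewrite Phi_lt in HPhi |- * by exact Hl. apply clip_interior. lra.
Qed.

Lemma central_of_settled V k : settled V -> (k < N)%nat -> - eps < V k < eps -> central V k.
Proof. intros HS Hk HVk. destruct (HS k Hk) as [|[[H1 _]|[H1 _]]]; [assumption|lra..]. Qed.

(* The next window of the top central opinion [t] is contained in its current
   window, and loses only opinions lying below all the ones it keeps. *)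
Lemma drift_Phi_top V t : settled V -> (t < N)%nat -> - eps < V t < eps ->
  (forall l, (l < N)%nat -> - eps < V l < eps -> V l <= V t) ->
  drift V t + h * avg N (win eps (Phi V) (Phi V t)) (drift V) <= drift (Phi V) t.
Proof.
  intros HS Ht HVt Htop.
  pose proof (central_of_settled V t HS Ht HVt) as [_ HPt].
  set (P := win eps (Phi V) (Phi V t)). set (Q := win eps V (V t)).
  assert (HPc : forall l, (l < N)%nat -> P l = true -> central V l)
    by (intros l Hl Hw; apply (settled_win_central V (Phi V t)); auto).
  assert (HQc : forall l, (l < N)%nat -> Q l = true -> central V l)
    by (intros l Hl Hw; apply (settled_win_central V (V t)); auto).
  assert (HPQ : forall l, (l < N)%nat -> P l = true -> Q l = true).
  { intros l Hl Hw. destruct (HPc l Hl Hw) as [HVl HPl].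
    pose proof (Htop l Hl HVl) as Hlt.
    pose proof (drift_mono N eps V l t eps_ge0 Hl Ht Hlt).
    apply win_true in Hw. rewrite (Phi_central V l Hl HPl), (Phi_central V t Ht HPt) in Hw.
    assert (h * drift V l <= h * drift V t) by (apply Rmult_le_compat_l; lra).
    apply win_true. lra. }
  assert (HcardP : 0 < card N P) by (apply card_win_pos; [lra|exact Ht]).
  assert (HcardQ : 0 < card N Q) by (apply card_win_pos; [lra|exact Ht]).
  assert (Hkept : mean N eps V (V t) <= avg N P V).
  { apply avg_le_avg; [exact HcardP|exact HcardQ|].
    intros l l' Hl Hl' Pl Ql' Hnot.
    assert (Pl' : P l' = false) by (destruct (P l') eqn:E; [exfalso; auto|reflexivity]).
    destruct (HQc l' Hl' Ql') as [HVl' _].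
    pose proof (Phi_mono N h eps V l' t h_ge0 eps_ge0 Hl' Ht (Htop l' Hl' HVl')).
    apply win_false in Pl'. apply win_true in Pl.
    left. apply (Phi_lt_reflect N h eps V l' l h_ge0 eps_ge0 Hl' Hl). lra. }
  assert (Hsplit : drift (Phi V) t = avg N P V + h * avg N P (drift V)).
  { unfold drift at 1, mean. fold P. rewrite <- avg_plus_scal. apply avg_ext_on.
    intros l Hl Pl. apply Phi_central; [exact Hl|apply HPc; assumption]. }
  unfold drift at 1. lra.
Qed.

Lemma drift_Phi_bottom V b : settled V -> (b < N)%nat -> - eps < V b < eps ->
  (forall l, (l < N)%nat -> - eps < V l < eps -> V b <= V l) ->
  drift (Phi V) b <= drift V b + h * avg N (win eps (Phi V) (Phi V b)) (drift V).
Proof.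
  intros HS Hb HVb Hbot.
  pose proof (drift_Phi_top (oppV V) b (settled_opp V HS) Hb) as Hopp.
  rewrite Phi_opp, !drift_opp in Hopp.
  change (oppV (Phi V) b) with (- Phi V b) in Hopp. rewrite win_opp in Hopp.
  unfold oppV in Hopp. rewrite avg_opp in Hopp.
  enough (- drift V b + h * - avg N (win eps (Phi V) (Phi V b)) (drift V)
          <= - drift (Phi V) b) by lra.
  apply Hopp; [lra|]. intros l Hl HVl. specialize (Hbot l Hl ltac:(lra)). lra.
Qed.

Section ExtremalOpinions.

Variables (V : nat -> R) (b t : nat).
Hypothesis V_settled : settled V.
Hypothesis b_lt : (b < N)%nat.
Hypothesis t_lt : (t < N)%nat.
Hypothesis b_central : central V b.
Hypothesis t_central : central V t.
Hypothesis between_b_t :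
  forall l, (l < N)%nat -> - eps < V l < eps -> V b <= V l <= V t.

Lemma avg_drift_between s : (s < N)%nat -> - eps < Phi V s < eps ->
  drift V b <= avg N (win eps (Phi V) (Phi V s)) (drift V) <= drift V t.
Proof.
  intros Hs HPs.
  assert (Hbt : forall l, (l < N)%nat -> win eps (Phi V) (Phi V s) l = true ->
                  drift V b <= drift V l <= drift V t).
  { intros l Hl Hw. destruct (settled_win_central V (Phi V s) l V_settled HPs Hl (or_intror Hw))
      as [HVl _].
    destruct (between_b_t l Hl HVl).
    split; apply drift_mono; auto; lra. }
  assert (Hcard : 0 < card N (win eps (Phi V) (Phi V s))) by (apply card_win_pos; [lra|exact Hs]).
  split; [apply avg_ge|apply avg_le]; auto; intros l Hl Hw; apply Hbt; auto.
Qed.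

Lemma avg_drift_bottom_le_top :
  avg N (win eps (Phi V) (Phi V b)) (drift V) <= avg N (win eps (Phi V) (Phi V t)) (drift V).
Proof.
  destruct b_central as [HVb HPb]. destruct t_central as [HVt HPt].
  apply avg_le_avg; [apply card_win_pos; [lra|assumption]..|].
  intros l l' Hl Hl' Pl Ql' Hnot.
  destruct (settled_win_central V (Phi V t) l V_settled HPt Hl (or_intror Pl)) as [HVl _].
  destruct (settled_win_central V (Phi V b) l' V_settled HPb Hl' (or_intror Ql')) as [HVl' _].
  assert (Phi V b <= Phi V l) by (apply Phi_mono; try lra; auto; apply between_b_t; auto).
  assert (Phi V l' <= Phi V t) by (apply Phi_mono; try lra; auto; apply between_b_t; auto).
  apply drift_mono; [lra|exact Hl'|exact Hl|left].
  apply (Phi_lt_reflect N h eps V l' l); [lra|lra|exact Hl'|exact Hl|].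
  apply win_true in Pl, Ql'.
  destruct (win eps (Phi V) (Phi V t) l') eqn:E1; [destruct (win eps (Phi V) (Phi V b) l) eqn:E2|].
  - exfalso; auto.
  - apply win_false in E2. lra.
  - apply win_false in E1. lra.
Qed.

Lemma extremal_drifts_step : exists A C,
  drift V t + h * A <= drift (Phi V) t /\ drift (Phi V) b <= drift V b + h * C /\
  C <= A /\ drift V b <= A /\ C <= drift V t.
Proof.
  destruct b_central as [HVb HPb]. destruct t_central as [HVt HPt].
  exists (avg N (win eps (Phi V) (Phi V t)) (drift V)),
         (avg N (win eps (Phi V) (Phi V b)) (drift V)).
  pose proof (avg_drift_between t t_lt HPt). pose proof (avg_drift_between b b_lt HPb).
  pose proof avg_drift_bottom_le_top.
  split; [apply drift_Phi_top; auto; intros l Hl HVl; apply between_b_t; auto|].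
  split; [apply drift_Phi_bottom; auto; intros l Hl HVl; apply between_b_t; auto|].
  lra.
Qed.

End ExtremalOpinions.

Lemma settled_orbit_extremal_drifts (Vs : nat -> nat -> R) b t :
  (forall n, Vs (S n) = Phi (Vs n)) -> (forall n, settled (Vs n)) ->
  (b < N)%nat -> (t < N)%nat ->
  (forall n, - eps < Vs n b < eps) -> (forall n, - eps < Vs n t < eps) ->
  (forall n l, (l < N)%nat -> - eps < Vs n l < eps -> Vs n b <= Vs n l <= Vs n t) ->
  drift (Vs 0%nat) t = 0 /\ drift (Vs 0%nat) b = 0.
Proof.
  intros HVs HS Hb Ht Hbmid Htmid Hbt.
  assert (Hc : forall n k, (k < N)%nat -> (forall n, - eps < Vs n k < eps) -> central (Vs n) k).
  { intros n k Hk Hmid. split; [apply Hmid|]. rewrite <- HVs. apply Hmid. }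
  assert (Hlin : forall n k, (k < N)%nat -> (forall n, - eps < Vs n k < eps) ->
                   Vs (S n) k = Vs n k + h * drift (Vs n) k).
  { intros n k Hk Hmid. rewrite HVs. apply Phi_central; [exact Hk|]. rewrite <- HVs. apply Hmid. }
  apply (extremal_drifts_zero (fun n => Vs n t) (fun n => Vs n b)
           (fun n => drift (Vs n) t) (fun n => drift (Vs n) b) h eps h_pos).
  - intros n. apply Hlin; assumption.
  - intros n. apply Hlin; assumption.
  - intros n. apply Rabs_le. specialize (Htmid n). lra.
  - intros n. apply Rabs_le. specialize (Hbmid n). lra.
  - intros n. apply drift_mono; [lra|exact Hb|exact Ht|].
    apply (Hbt n b Hb (Hbmid n)).
  - intros n. cbv beta. rewrite HVs.
    apply extremal_drifts_step; auto.
Qed.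

Lemma traj_mono V n0 i j : (i < N)%nat -> (j < N)%nat -> traj V n0 i <= traj V n0 j ->
  forall n, (n0 <= n)%nat -> traj V n i <= traj V n j.
Proof.
  intros Hi Hj Hij n Hn. induction Hn as [|n Hn IH]; [exact Hij|].
  apply Phi_mono; assumption.
Qed.

Lemma settled_traj V T : (forall k, (k < N)%nat -> settles_by V T k) ->
  forall n, (T <= n)%nat -> settled (traj V n).
Proof.
  intros HT n Hn k Hk. unfold central. change (Phi (traj V n)) with (traj V (S n)).
  destruct (HT k Hk) as [H|[H|H]].
  - right; left; split; apply H; lia.
  - right; right; split; apply H; lia.
  - left; split; apply H.
Qed.

Lemma traj_eventually_fixed V : in_cube N V ->
  exists T, forall k, (k < N)%nat -> traj V (S T) k = traj V T k.
Proof.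
  intros HV.
  destruct (exists_common_threshold (settles_by V) N) as [T HT].
  { intros k Hk. apply exists_settles_by; assumption. }
  { intros T T' k. apply settles_by_mono. }
  set (Mid := fun k => forall n, - eps < traj V n k < eps).
  assert (HMid : forall n k, (T <= n)%nat -> (k < N)%nat -> - eps < traj V n k < eps -> Mid k).
  { intros n k Hn Hk Hm. destruct (HT k Hk) as [H|[H|H]]; [specialize (H n Hn); lra..|exact H]. }
  exists T. intros k Hk.
  destruct (HT k Hk) as [H|[H|Hk_mid]]; [rewrite !H; auto..|].
  assert (Hex : exists k, (k < N)%nat /\ Mid k) by (exists k; split; assumption).
  destruct (exists_argmax Mid (traj V T) N Hex) as [t [Ht [Mt Htop]]].
  destruct (exists_argmax Mid (fun k => - traj V T k) N Hex) as [b [Hb [Mb Hbot]]].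
  assert (Hbt : forall n l, (l < N)%nat -> - eps < traj V (T + n) l < eps ->
                  traj V (T + n) b <= traj V (T + n) l <= traj V (T + n) t).
  { intros n l Hl HVl. assert (Ml : Mid l) by (apply (HMid (T + n)%nat); auto; lia).
    specialize (Htop l Hl Ml). specialize (Hbot l Hl Ml).
    split; apply (traj_mono V T); auto; first [lia|lra]. }
  destruct (settled_orbit_extremal_drifts (fun j => traj V (T + j)) b t) as [Ht0 Hb0]; auto.
  { intros n. rewrite Nat.add_succ_r. reflexivity. }
  { intros n. apply (settled_traj V T); [assumption|lia]. }
  rewrite Nat.add_0_r in Ht0, Hb0.
  assert (Hdk : drift (traj V T) k = 0).
  { pose proof (Hbt 0%nat k Hk (Hk_mid _)) as Hbkt. rewrite Nat.add_0_r in Hbkt.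
    apply Rle_antisym; [rewrite <- Ht0|rewrite <- Hb0]; apply drift_mono; auto; lra. }
  change (traj V (S T) k) with (Phi (traj V T) k).
  rewrite Phi_lt, Hdk, Rmult_0_r, Rplus_0_r by exact Hk.
  apply clip_id. specialize (Hk_mid T). lra.
Qed.

End Dynamics.

Theorem theorem4 (N : nat) (h eps : R) (V0 : nat -> R) :
  (1 <= N)%nat -> 0 < h < 1 -> 0 < eps <= 1 / 2 ->
  in_cube N V0 -> nondecreasing_vec N V0 ->
  exists Vstar : nat -> R,
    (forall k, (k < N)%nat ->
       Un_cv (fun n => Nat.iter n (Phi N h eps) V0 k) (Vstar k)) /\
    (forall k, (k < N)%nat -> Phi N h eps Vstar k = Vstar k).
Proof.
  intros _ [Hh _] [He Heps] HV _.
  destruct (traj_eventually_fixed N h eps Hh He Heps V0 HV) as [T HT].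
  exists (traj N h eps V0 T). split.
  - intros k Hk e He'. exists T. intros n Hn. unfold R_dist.
    change (Nat.iter n (Phi N h eps) V0 k) with (traj N h eps V0 n k).
    rewrite (traj_const_from N h eps V0 T HT n Hn k Hk), Rminus_diag, Rabs_R0. exact He'.
  - intros k Hk. apply HT, Hk.
Qed.
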